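(* For every $d\ge 1$, the class of $d$-CBU graphs is strictly contained in the class of $(d+1)$-CBU graphs.
   Context: Let $e_1,\ldots,e_d$ be the standard basis of $\mathbb{R}^d$. For $d\ge 1$, a graph belongs to $d$-CBU if one can assign to each vertex an axis-parallel box (product of $d$ closed intervals of positive length) in $\mathbb{R}^d$ such that the boxes have pairwise disjoint interiors, two distinct vertices are adjacent iff their boxes intersect, and any two intersecting boxes intersect in a $(d-1)$-dimensional box orthogonal to $e_1$. *)

From HB Require Import structures.
From mathcomp Require Import all_boot all_order all_algebra.
From mathcomp Require Import reals.
Set Implicit Arguments. Unset Strict Implicit. Unset Printing Implicit Defensive.
Import Order.TTheory GRing.Theory Num.Theory.
Local Open Scope ring_scope.

Definition simple_graph (T : finType) (e : rel T) : Prop :=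
  irreflexive e /\ symmetric e.

(* Points of R^d are functions 'I_d -> R; coordinate with index 0 is e_1. *)
Definition in_box (R : realType) (d : nat) (lo hi : 'I_d -> R) (x : 'I_d -> R) : Prop :=
  forall i, lo i <= x i <= hi i.

Definition in_box_int (R : realType) (d : nat) (lo hi : 'I_d -> R) (x : 'I_d -> R) : Prop :=
  forall i, lo i < x i < hi i.

Definition is_box_orth_e1 (R : realType) (d : nat) (A : ('I_d -> R) -> Prop) : Prop :=
  exists (c : R) (a b : 'I_d -> R),
    (forall i : 'I_d, val i != 0%N -> a i < b i) /\
    (forall x : 'I_d -> R,
        A x <-> (forall i : 'I_d, if val i == 0%N then x i = c else a i <= x i <= b i)).

Definition CBU (R : realType) (d : nat) (T : finType) (e : rel T) : Prop :=
  exists lo hi : T -> 'I_d -> R,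
    (forall v i, lo v i < hi v i) /\
    (forall u v, u != v ->
       ~ (exists x, in_box_int (lo u) (hi u) x /\ in_box_int (lo v) (hi v) x)) /\
    (forall u v, u != v ->
       (e u v <-> exists x, in_box (lo u) (hi u) x /\ in_box (lo v) (hi v) x)) /\
    (forall u v, u != v ->
       (exists x, in_box (lo u) (hi u) x /\ in_box (lo v) (hi v) x) ->
       is_box_orth_e1 (fun x => in_box (lo u) (hi u) x /\ in_box (lo v) (hi v) x)).

(* Appending a last coordinate [0, 1] to every box turns a d-CBU representation
   into a (d+1)-CBU one in which e_1 is still the contact direction.

   For strictness take the crown graph on vertices a_p = (false, p) and
   b_p = (true, p), p ranging over 2d+1 indices, with a_p ~ b_q iff p <> q.
   In a box representation in R^d the boxes of a_p and b_p are disjoint, hence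
   separated along some coordinate i with either hi a_p < lo b_p or
   hi b_p < lo a_p.  Two indices p <> q with the same coordinate and the same
   orientation would give hi a_p < lo b_p <= hi a_q < lo b_q <= hi a_p, so
   there are at most 2d indices.  In R^(d+1) the crown graph does have a contact
   representation: the contact coordinate e_1 also separates the pair indexed
   by None, and each further coordinate separates two more pairs. *)
From HB Require Import structures.
From mathcomp Require Import all_boot all_order all_algebra.
From mathcomp Require Import reals.
From mathcomp Require Import zify lra.
Set Implicit Arguments. Unset Strict Implicit. Unset Printing Implicit Defensive.
Import Order.TTheory GRing.Theory Num.Theory.
Local Open Scope ring_scope.

Section Boxes.
Variables (R : realType) (n : nat).
Implicit Types (l h : 'I_n -> R).

Lemma boxes_meetP l1 h1 l2 h2 :
  (forall i, l1 i <= h1 i) -> (forall i, l2 i <= h2 i) ->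
  (exists x, in_box l1 h1 x /\ in_box l2 h2 x) <->
  (forall i, l1 i <= h2 i /\ l2 i <= h1 i).
Proof.
move=> lh1 lh2; split=> [[x [x1 x2]] i | le12].
  by have /andP[a1 b1] := x1 i; have /andP[a2 b2] := x2 i; split; lra.
exists (fun i => Num.max (l1 i) (l2 i)); split=> i; have [a b] := le12 i;
  by rewrite le_max ge_max lexx ?orbT /= ?lh1 ?lh2 ?a ?b.
Qed.

Lemma boxes_apart l1 h1 l2 h2 :
  (forall i, l1 i <= h1 i) -> (forall i, l2 i <= h2 i) ->
  ~ (exists x, in_box l1 h1 x /\ in_box l2 h2 x) ->
  exists i, h1 i < l2 i \/ h2 i < l1 i.
Proof.
move=> lh1 lh2 /(boxes_meetP lh1 lh2) disj.
have [/existsP[i /orP sep] | /existsPn nosep] :=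
  boolP [exists i, (h1 i < l2 i) || (h2 i < l1 i)]; first by exists i.
by case: disj => i; have := nosep i; rewrite negb_or -!leNgt => /andP[].
Qed.

Lemma box_interiors_disjoint l1 h1 l2 h2 :
  (exists i, h1 i <= l2 i \/ h2 i <= l1 i) ->
  ~ (exists x, in_box_int l1 h1 x /\ in_box_int l2 h2 x).
Proof.
move=> [i sep] [x [x1 x2]].
by have /andP[a1 b1] := x1 i; have /andP[a2 b2] := x2 i; case: sep; lra.
Qed.

Lemma eq_is_box_orth_e1 (A B : ('I_n -> R) -> Prop) :
  (forall x, A x <-> B x) -> is_box_orth_e1 A -> is_box_orth_e1 B.
Proof. by move=> AB [c [a [b [ab Ax]]]]; exists c, a, b; split=> // x; rewrite -AB. Qed.

End Boxes.

Section TouchingBoxes.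
Variables (R : realType) (n : nat).

Lemma is_box_orth_e1_touching (l1 h1 l2 h2 : 'I_n.+1 -> R) :
  (forall i, l1 i < h1 i) -> (forall i, l2 i < h2 i) ->
  h1 ord0 = l2 ord0 ->
  (forall i, i != ord0 -> l1 i < h2 i /\ l2 i < h1 i) ->
  is_box_orth_e1 (fun x => in_box l1 h1 x /\ in_box l2 h2 x).
Proof.
move=> lh1 lh2 touch ov.
have val_eq0 (i : 'I_n.+1) : (val i == 0%N) = (i == ord0) by [].
exists (h1 ord0), (fun i => Num.max (l1 i) (l2 i)), (fun i => Num.min (h1 i) (h2 i)).
split=> [i | x].
  by rewrite val_eq0 => /ov[o1 o2]; rewrite gt_max !lt_min lh1 lh2 o1 o2.
split=> [[x1 x2] i | xin]; rewrite ?val_eq0.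
  have /andP[a1 b1] := x1 i; have /andP[a2 b2] := x2 i.
  case: eqP => [i0E | _]; last by rewrite ge_max le_min; apply/andP; split; apply/andP.
  by rewrite i0E in a1 b1 a2 b2 *; lra.
split=> i; have := xin i; rewrite val_eq0; case: eqP => [-> -> | _].
- by have := lh1 ord0; rewrite lexx andbT => /ltW.
- by rewrite ge_max le_min => /andP[/andP[-> _] /andP[-> _]].
- by have := lh2 ord0; rewrite -touch lexx => /ltW.
- by rewrite ge_max le_min => /andP[/andP[_ ->] /andP[_ ->]].
Qed.

Lemma CBU_of_touching_boxes (T : finType) (e : rel T) (lo hi : T -> 'I_n.+1 -> R) :
  (forall v i, lo v i < hi v i) ->
  (forall u v, u != v -> e u v -> hi u ord0 = lo v ord0 \/ hi v ord0 = lo u ord0) ->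
  (forall u v i, u != v -> e u v -> i != ord0 -> lo u i < hi v i /\ lo v i < hi u i) ->
  (forall u v, u != v -> ~~ e u v -> exists i, hi u i < lo v i \/ hi v i < lo u i) ->
  CBU R n.+1 e.
Proof.
move=> lohi touch ov apart.
have lehi v i : lo v i <= hi v i by apply/ltW.
have adjP u v : u != v ->
    e u v <-> exists x, in_box (lo u) (hi u) x /\ in_box (lo v) (hi v) x.
  move=> uv; rewrite boxes_meetP //; split=> [euv i | meet].
    have [-> | i0] := eqVneq i ord0.
      have l_u := lohi u ord0; have l_v := lohi v ord0.
      by case: (touch u v uv euv) => t; split; lra.
    by have [o1 o2] := ov u v i uv euv i0; split; apply/ltW.
  by apply/negPn/negP => /(apart u v uv)[i]; have [m1 m2] := meet i; lra.
exists lo, hi; split=> //; split; last split=> //.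
  move=> u v uv; apply: box_interiors_disjoint.
  have [euv | neuv] := boolP (e u v).
    by exists ord0; case: (touch u v uv euv) => ->; rewrite lexx; [left | right].
  by have [i sep] := apart u v uv neuv; exists i; case: sep => /ltW; [left | right].
move=> u v uv /(adjP u v uv) euv.
case: (touch u v uv euv) => t.
  by apply: is_box_orth_e1_touching => // i /(ov u v i uv euv).
apply: (eq_is_box_orth_e1 (fun x => and_comm _ _)).
by apply: is_box_orth_e1_touching => // i /(ov u v i uv euv)[o1 o2].
Qed.

End TouchingBoxes.

Section ExtendLast.
Variables (R : realType) (d : nat).
Implicit Types (f l h : 'I_d -> R) (y : 'I_d.+1 -> R).

Definition extend_last f (z : R) : 'I_d.+1 -> R :=
  fun i => if unlift ord_max i is Some k then f k else z.

Definition drop_last y : 'I_d -> R := fun k => y (lift ord_max k).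

Lemma extend_last_lift f z k : extend_last f z (lift ord_max k) = f k.
Proof. by rewrite /extend_last liftK. Qed.

Lemma extend_last_max f z : extend_last f z ord_max = z.
Proof. by rewrite /extend_last unlift_none. Qed.

Lemma in_box_extend l h y :
  in_box (extend_last l 0) (extend_last h 1) y <->
  in_box l h (drop_last y) /\ 0 <= y ord_max <= 1.
Proof.
split=> [yin | [yin ylast] i].
  split=> [k|]; [have := yin (lift ord_max k) | have := yin ord_max];
  by rewrite ?extend_last_lift ?extend_last_max.
by case: (unliftP ord_max i) => [k -> | ->]; rewrite ?extend_last_max ?extend_last_lift.
Qed.

Lemma boxes_meet_extend l1 h1 l2 h2 :
  (exists x, in_box l1 h1 x /\ in_box l2 h2 x) <->
  (exists y, in_box (extend_last l1 0) (extend_last h1 1) y /\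
             in_box (extend_last l2 0) (extend_last h2 1) y).
Proof.
split=> [[x [x1 x2]] | [y [/in_box_extend[y1 _] /in_box_extend[y2 _]]]]; last by exists (drop_last y).
exists (extend_last x 0); rewrite !in_box_extend extend_last_max lexx ler01.
by split; split=> // k; rewrite /drop_last extend_last_lift; [apply: x1 | apply: x2].
Qed.

Lemma in_box_int_extend l h y :
  in_box_int (extend_last l 0) (extend_last h 1) y -> in_box_int l h (drop_last y).
Proof. by move=> yin k; have := yin (lift ord_max k); rewrite !extend_last_lift. Qed.

Lemma is_box_orth_e1_extend (A : ('I_d -> R) -> Prop) : (0 < d)%N ->
  is_box_orth_e1 A -> is_box_orth_e1 (fun y => A (drop_last y) /\ 0 <= y ord_max <= 1).
Proof.
move=> d_gt0 [c [a [b [ab Aiff]]]].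
have val_lift k : val (lift ord_max k) = val k := lift_max k.
have val_max : (val (@ord_max d) == 0%N) = false by case: d d_gt0.
exists c, (extend_last a 0), (extend_last b 1); split=> [i | y].
  case: (unliftP ord_max i) => [k -> | ->]; last by rewrite !extend_last_max ltr01.
  by rewrite val_lift !extend_last_lift; apply: ab.
rewrite Aiff; split=> [[yA ylast] i | yin].
  case: (unliftP ord_max i) => [k -> | ->]; last by rewrite val_max !extend_last_max.
  by have := yA k; rewrite val_lift !extend_last_lift.
split; last by have := yin ord_max; rewrite val_max !extend_last_max.
by move=> k; have := yin (lift ord_max k); rewrite val_lift !extend_last_lift.
Qed.

End ExtendLast.

Lemma CBU_succ (R : realType) d (T : finType) (e : rel T) :
  (0 < d)%N -> CBU R d e -> CBU R d.+1 e.
Proof.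
move=> d_gt0 [lo [hi [lohi [ints [adj orth]]]]].
exists (fun v => extend_last (lo v) 0), (fun v => extend_last (hi v) 1).
split=> [v i | ].
  by case: (unliftP ord_max i) => [k -> | ->]; rewrite ?extend_last_max ?extend_last_lift ?ltr01.
split=> [u v uv [y [yu yv]] | ].
  by apply: (ints u v uv); exists (drop_last y); split; apply: in_box_int_extend.
split=> u v uv; first by rewrite adj //; apply: boxes_meet_extend.
move=> /(boxes_meet_extend (lo u) (hi u) (lo v) (hi v)).2
  /(orth u v uv)/(is_box_orth_e1_extend d_gt0).
by apply: eq_is_box_orth_e1 => y; rewrite !in_box_extend; tauto.
Qed.

Definition crown (P : finType) : rel (bool * P) :=
  fun u v => (u.1 != v.1) && (u.2 != v.2).

Lemma crown_simple (P : finType) : simple_graph (@crown P).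
Proof. by split=> [u | u v]; rewrite /crown ?eqxx // eq_sym [u.2 == _]eq_sym. Qed.

Lemma crown_not_CBU (R : realType) d (P : finType) :
  (2 * d < #|P|)%N -> ~ CBU R d (@crown P).
Proof.
move=> P_gt [lo [hi [lohi [_ [adj _]]]]].
have lehi v i : lo v i <= hi v i by apply/ltW.
pose a p : bool * P := (false, p); pose b p : bool * P := (true, p).
have sep_dir p : exists c : 'I_d * bool,
    if c.2 then hi (a p) c.1 < lo (b p) c.1 else hi (b p) c.1 < lo (a p) c.1.
  have [|i [sep | sep]] := boxes_apart (lehi (a p)) (lehi (b p)).
  - by rewrite -adj // /crown /= eqxx.
  - by exists (i, true).
  - by exists (i, false).
have meet p q i : p != q -> lo (b q) i <= hi (a p) i /\ lo (a p) i <= hi (b q) i.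
  move=> pq; have /adj[// | x meet] : crown (a p) (b q) by rewrite /crown /= pq.
  by have [] := (boxes_meetP (lehi _) (lehi _)).1 (ex_intro _ x meet) i.
pose f p : 'I_d * bool := xchoose (sep_dir p).
have f_inj : injective f.
  move=> p q fpq; apply/eqP/negPn/negP => pq.
  have qp : q != p by rewrite eq_sym.
  move: (xchooseP (sep_dir p)) (xchooseP (sep_dir q)); rewrite -/(f p) -/(f q) {}fpq.
  case: (f q) => i [] /= sp sq.
  - by have [mpq _] := meet p q i pq; have [mqp _] := meet q p i qp; lra.
  - by have [_ mpq] := meet p q i pq; have [_ mqp] := meet q p i qp; lra.
by have := leq_card f f_inj; rewrite card_prod card_ord card_bool; lia.
Qed.

Section CrownBoxes.
Local Open Scope nat_scope.
Variable d : nat.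
Hypothesis d_gt0 : 0 < d.

Definition slot (j : 'I_d) (s : bool) : nat := if s then 2 * d - j.+1 else j.

(* The interval of the box of a vertex in coordinate k, coordinate 0 being e_1.
   - k = 0: a_(Some _) on [1,2], b_(Some _) on [2,3], a_None on [3,4] and
     b_None on [0,1]: the boxes of crown edges touch, and a_None, b_None are
     apart from each other and from the other vertices of their side.
   - k = 1: the b_(Some _) occupy disjoint slots, b_(0,false) the leftmost and
     b_(0,true) the rightmost one; a_(0,false) and a_(0,true) miss exactly these
     two slots, and all other a's span all slots.  When d = 1, a_(0,false) and
     a_(0,true) are also disjoint here.
   - k = j+1 >= 2: a_(j,true) and a_(j,false) sit at the two ends, apart from
     all other a's and missing b_(j,true) resp. b_(j,false); every other
     a_(j',s) sits in the middle at a place depending on s. *)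
Definition crown_box (v : bool * option ('I_d * bool)) (k : nat) : nat * nat :=
  match k, v with
  | 0, (false, Some _) => (1, 2)
  | 0, (true, Some _) => (2, 3)
  | 0, (false, None) => (3, 4)
  | 0, (true, None) => (0, 1)
  | 1, (false, Some (j, s)) =>
      if val j == 0 then (if s then (0, 6 * d - 4) else (3, 6 * d)) else (0, 6 * d)
  | 1, (true, Some (j, s)) => (3 * slot j s + 1, 3 * slot j s + 2)
  | 1, (_, None) => (0, 6 * d)
  | m.+2, (false, Some (j, s)) =>
      if val j == m.+1 then (if s then (0, 1) else (9, 10)) else (if s then (2, 4) else (6, 8))
  | m.+2, (true, Some (j, s)) =>
      if val j == m.+1 then (if s then (2, 10) else (0, 8)) else (0, 10)
  | _.+2, (_, None) => (0, 10)
  end.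

Definition overlap (I J : nat * nat) := (I.1 < J.2) && (J.1 < I.2).
Definition apart (I J : nat * nat) := (I.2 < J.1) || (J.2 < I.1).

Ltac box_cases := rewrite /crown_box /overlap /apart /slot /=; repeat case: eqP => //=; lia.

Lemma crown_box_proper v k : (crown_box v k).1 < (crown_box v k).2.
Proof. by case: v => [[] [[[j jd] []]|]]; case: k => [|[|k]]; box_cases. Qed.

Lemma crown_box_touch p q : p != q ->
  (crown_box (false, p) 0).2 = (crown_box (true, q) 0).1 \/
  (crown_box (true, q) 0).2 = (crown_box (false, p) 0).1.
Proof. by case: p q => [p|] [q|] //= _; [left | right | right]. Qed.

Lemma some_pair_eq (j j' : 'I_d) (s s' : bool) :
  (Some (j, s) == Some (j', s')) = (val j == val j') && (s == s').
Proof. by rewrite (inj_eq (@Some_inj _)) xpair_eqE. Qed.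

Lemma crown_box_overlap p q k : p != q -> 0 < k <= d ->
  overlap (crown_box (false, p) k) (crown_box (true, q) k).
Proof.
case: k => [|[|k]] // pq /andP[_ k_le];
  by case: p q pq => [[[j jd] []]|] [[[j' jd'] []]|] //; rewrite ?some_pair_eq; box_cases.
Qed.

Lemma crown_box_apart u v : u != v -> ~~ crown u v ->
  exists2 k, k <= d & apart (crown_box u k) (crown_box v k).
Proof.
case: u v => [s p] [t q]; rewrite /crown /= xpair_eqE !negb_and !negbK.
have [d1 | d2] := leqP d 1;
case: p q => [[[[|j] jd] []]|] [[[[|j'] jd'] []]|]; case: s t => [] [];
  rewrite ?some_pair_eq //= => uv sep;
  first [ by exists 0; box_cases | by exists 1; box_cases | by exists 2; box_cases
        | by exists j.+2; box_cases | by exists j'.+2; box_cases ].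
Qed.

End CrownBoxes.

Lemma crown_CBU_succ (R : realType) d : (0 < d)%N ->
  CBU R d.+1 (@crown (option ('I_d * bool))).
Proof.
move=> d_gt0.
have i_le (i : 'I_d.+1) : (val i <= d)%N := ltn_ord i.
apply: (@CBU_of_touching_boxes R d _ _
          (fun v i => (crown_box v i).1%:R) (fun v i => (crown_box v i).2%:R)).
- by move=> v i; rewrite ltr_nat crown_box_proper.
- move=> [[] p] [[] q] _; rewrite /crown //= => pq.
    by rewrite eq_sym in pq; case: (crown_box_touch pq) => /= ->; [right | left].
  by case: (crown_box_touch pq) => /= ->; [left | right].
- move=> [[] p] [[] q] i _; rewrite /crown //= => pq i0;
    have ik : (0 < val i <= d)%N by rewrite lt0n i_le andbT.
    by rewrite eq_sym in pq; have /andP[o1 o2] := crown_box_overlap d_gt0 pq ik; rewrite !ltr_nat.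
  by have /andP[o1 o2] := crown_box_overlap d_gt0 pq ik; rewrite !ltr_nat.
- move=> u v uv /(crown_box_apart d_gt0 uv) [k k_le sep]; exists (inord k).
  by rewrite inordK // !ltr_nat; apply/orP.
Qed.

Theorem mainTheorem7 (R : realType) (d : nat) (hd : (1 <= d)%N) :
  (forall (T : finType) (e : rel T), simple_graph e -> CBU R d e -> CBU R d.+1 e) /\
  (exists (T : finType) (e : rel T), simple_graph e /\ CBU R d.+1 e /\ ~ CBU R d e).
Proof.
split=> [T e _ | ]; first exact: CBU_succ.
exists _, (@crown (option ('I_d * bool))); split; first exact: crown_simple.
split; first exact: crown_CBU_succ.
by apply: crown_not_CBU; rewrite card_option card_prod card_ord card_bool; lia.
Qed.
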